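(* Let $f:\mathbb{R}^d\to\mathbb{R}$ be differentiable with $L$-Lipschitz gradient and $c$-strongly convex, with minimizer $\vec x^*$. Consider single-step SGD iterations (as defined in the context) with constant learning rate $\alpha\le\frac{1}{3L}$ satisfying elastic consistency with constant $B$. Then for every $t\ge0$, $$\mathbb{E}\|\vec x_{t+1}-\vec x^*\|^2\le\Big(1-\frac{\alpha c}{2}\Big)\mathbb{E}\|\vec x_t-\vec x^*\|^2+\frac{2\alpha^3B^2L^2}{c}+3\alpha^2\sigma^2+3\alpha^4L^2B^2.$$
   Context: $c$-strong convexity ($c>0$) means $(\vec x-\vec y)^\top(\nabla f(\vec x)-\nabla f(\vec y))\ge c\|\vec x-\vec y\|^2$ for all $\vec x,\vec y$. All random objects live on a probability space with a filtration $(\mathcal F_t)_{t\ge0}$. Single-step SGD iterations: $\vec x_0\in\mathbb{R}^d$ is deterministic. At each iteration $t\ge0$ some processor $i=i_t$ (chosen independently of the algorithm's randomness) holds a view $\vec v_t^{i}$. The vectors $\vec x_t,\vec v_t^{i}$ are $\mathcal F_t$-measurable, and the processor computes an $\mathcal F_{t+1}$-measurable stochastic gradient $\tilde G(\vec v_t^{i})$ with $\mathbb{E}[\tilde G(\vec v_t^{i})\mid\mathcal F_t]=\nabla f(\vec v_t^{i})$ and $\mathbb{E}[\|\tilde G(\vec v_t^{i})-\nabla f(\vec v_t^{i})\|^2\mid\mathcal F_t]\le\sigma^2$. Update: $\vec x_{t+1}=\vec x_t-\alpha\tilde G(\vec v_t^{i})$. Elastic consistency with constant $B>0$: $\mathbb{E}\|\vec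 x_t-\vec v_t^{i}\|^2\le\alpha^2B^2$ for every $t$ and the processor $i$ acting at $t$. *)

From HB Require Import structures.
From mathcomp Require Import all_boot all_order all_algebra.
From mathcomp Require Import all_classical all_reals all_analysis.
Set Implicit Arguments. Unset Strict Implicit. Unset Printing Implicit Defensive.
Import Order.TTheory GRing.Theory Num.Theory.
Import numFieldNormedType.Exports.
Local Open Scope classical_set_scope.
Local Open Scope ring_scope.

Definition vdot {R : realType} {d : nat} (u v : 'rV[R]_d) : R :=
  \sum_(i < d) u ord0 i * v ord0 i.

Definition sqnorm {R : realType} {d : nat} (u : 'rV[R]_d) : R := vdot u u.
Definition enorm {R : realType} {d : nat} (u : 'rV[R]_d) : R := Num.sqrt (sqnorm u).

Definition is_gradient {R : realType} {d : nat}
  (f : 'rV[R]_d -> R) (grad : 'rV[R]_d -> 'rV[R]_d) : Prop :=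
  forall x, differentiable f x /\ forall h, ('d f x) h = vdot (grad x) h.

Definition is_filtration {d0 : measure_display} {T : measurableType d0}
  (F : nat -> set (set T)) : Prop :=
  [/\ forall t, sigma_algebra setT (F t),
      forall t A, F t A -> measurable A &
      forall s t, (s <= t)%N -> F s `<=` F t].

Definition vmeasurable_wrt {d0 : measure_display} {T : measurableType d0}
  {R : realType} {d : nat} (G : set (set T)) (X : T -> 'rV[R]_d) : Prop :=
  forall (i : 'I_d) (B : set R), measurable B ->
    G ((fun w => X w ord0 i) @^-1` B).

(* E[X | G] = Y  (componentwise): X integrable, Y G-measurable and integrable,
   and the defining identity int_A X = int_A Y for every A in G. *)
Definition condexp_eq {d0 : measure_display} {T : measurableType d0}
  {R : realType} {d : nat} (mu : probability T R) (G : set (set T))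
  (X Y : T -> 'rV[R]_d) : Prop :=
  [/\ vmeasurable_wrt G Y,
      forall i : 'I_d, mu.-integrable setT (fun w => (X w ord0 i)%:E),
      forall i : 'I_d, mu.-integrable setT (fun w => (Y w ord0 i)%:E) &
      forall (i : 'I_d) (A : set T), G A ->
        (\int[mu]_(w in A) (X w ord0 i)%:E = \int[mu]_(w in A) (Y w ord0 i)%:E)%E].

(* E[ ||X - Y||^2 | G ] <= s  a.s., i.e. for every A in G,
   int_A ||X - Y||^2 <= s * P(A). *)
Definition condvar_le {d0 : measure_display} {T : measurableType d0}
  {R : realType} {d : nat} (mu : probability T R) (G : set (set T))
  (X Y : T -> 'rV[R]_d) (s : R) : Prop :=
  forall A : set T, G A ->
    (\int[mu]_(w in A) (sqnorm (X w - Y w))%:E <= s%:E * mu A)%E.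

Definition Esq {d0 : measure_display} {T : measurableType d0}
  {R : realType} {d : nat} (mu : probability T R) (X : T -> 'rV[R]_d) : \bar R :=
  (\int[mu]_w (sqnorm (X w))%:E)%E.

From HB Require Import structures.
From mathcomp Require Import all_boot all_order all_algebra.
From mathcomp Require Import all_classical all_reals all_analysis.
From mathcomp Require Import ring lra measurable_realfun.
Import Order.TTheory GRing.Theory Num.Theory.
Import numFieldNormedType.Exports.
Local Open Scope classical_set_scope.
Local Open Scope ring_scope.

(* Write e = x_t - x*, xi = G_t - grad f(v_t) for the gradient noise and
   p = grad f(v_t) - grad f(x_t) for the error caused by the stale view, so that
   x_{t+1} - x* = e - alpha (xi + p + grad f(x_t)).  Expanding the square:
   the cross term <e, xi> has zero mean because e is F_t-measurable and
   E[xi | F_t] = 0; the cross term <e, p> is handled by Young's inequality with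
   weight c/2 together with |p| <= L |x_t - v_t|; and <e, grad f(x_t)> >= c |e|^2
   while co-coercivity |grad f(x_t)|^2 <= L <e, grad f(x_t)> lets the term
   3 alpha^2 |grad f(x_t)|^2 be absorbed as soon as 3 alpha L <= 1.  Taking
   expectations with E|xi|^2 <= sigma^2 and E|x_t - v_t|^2 <= alpha^2 B^2 gives
   the bound.  The zero mean of <e, xi> is derived from the defining identity of
   the conditional expectation by approximating the coordinates of e with simple
   F_t-measurable functions and passing to the limit by dominated convergence. *)

Section VectorAlgebra.
Context {R : realType} {d : nat}.
Implicit Types (u v w : 'rV[R]_d).

Lemma vdotC u v : vdot u v = vdot v u.
Proof. by apply: eq_bigr => i _; rewrite mulrC. Qed.

Lemma vdotDl u v w : vdot (u + v) w = vdot u w + vdot v w.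
Proof. by rewrite /vdot -big_split; apply: eq_bigr => i _; rewrite !mxE mulrDl. Qed.

Lemma vdotDr u v w : vdot w (u + v) = vdot w u + vdot w v.
Proof. by rewrite vdotC vdotDl !(vdotC w). Qed.

Lemma vdotZl (a : R) u v : vdot (a *: u) v = a * vdot u v.
Proof. by rewrite /vdot mulr_sumr; apply: eq_bigr => i _; rewrite !mxE mulrA. Qed.

Lemma vdotZr (a : R) u v : vdot u (a *: v) = a * vdot u v.
Proof. by rewrite vdotC vdotZl vdotC. Qed.

Lemma vdotNl u v : vdot (- u) v = - vdot u v.
Proof. by rewrite -scaleN1r vdotZl mulN1r. Qed.

Lemma vdotNr u v : vdot u (- v) = - vdot u v.
Proof. by rewrite vdotC vdotNl vdotC. Qed.

Lemma vdotBl u v w : vdot (u - v) w = vdot u w - vdot v w.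
Proof. by rewrite vdotDl vdotNl. Qed.

Lemma vdotBr u v w : vdot w (u - v) = vdot w u - vdot w v.
Proof. by rewrite vdotDr vdotNr. Qed.

Lemma sqnorm_ge0 u : 0 <= sqnorm u.
Proof. by apply: sumr_ge0 => i _; rewrite -expr2 sqr_ge0. Qed.

Lemma sqnormN u : sqnorm (- u) = sqnorm u.
Proof. by rewrite /sqnorm vdotNl vdotNr opprK. Qed.

Lemma sqnormZ (a : R) u : sqnorm (a *: u) = a ^+ 2 * sqnorm u.
Proof. by rewrite /sqnorm vdotZl vdotZr mulrA expr2. Qed.

Lemma sqnormB u v : sqnorm (u - v) = sqnorm u - 2 * vdot u v + sqnorm v.
Proof. rewrite /sqnorm !vdotBl !vdotBr (vdotC v u); ring. Qed.

Lemma sqnorm_eq0 u : (sqnorm u == 0) = (u == 0).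
Proof.
apply/idP/eqP => [|->]; last by rewrite /sqnorm /vdot big1 // => i _; rewrite mxE mul0r.
rewrite psumr_eq0 => [/allP u0|i _]; last by rewrite -expr2 sqr_ge0.
apply/rowP => i; have := u0 i (mem_index_enum _).
by rewrite !mxE /= mulf_eq0 orbb => /eqP.
Qed.

Lemma sqr_coord_le_sqnorm u i : u ord0 i ^+ 2 <= sqnorm u.
Proof.
rewrite /sqnorm /vdot (bigD1 i) //= -expr2 lerDl.
by apply: sumr_ge0 => j _; rewrite -expr2 sqr_ge0.
Qed.

Lemma young_vdot u v (k : R) : 0 < k -> 2 * vdot u v <= k * sqnorm u + k^-1 * sqnorm v.
Proof.
move=> k0; rewrite /sqnorm /vdot !mulr_sumr -big_split /=; apply: ler_sum => i _.
set a := u ord0 i; set b := v ord0 i.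
have : 0 <= k^-1 * (k * a - b) ^+ 2 by rewrite mulr_ge0 // ?invr_ge0 ?sqr_ge0 ?ltW.
have -> : k^-1 * (k * a - b) ^+ 2
    = (k * k^-1) * (k * a * a) - 2 * ((k * k^-1) * (a * b)) + k^-1 * (b * b) by ring.
rewrite divff ?gt_eqF // !mul1r; lra.
Qed.

Lemma vdot_le_of_sqnorm_le {r : R} {u v} :
  0 < r -> sqnorm u <= r ^+ 2 * sqnorm v -> vdot u v <= r * sqnorm v.
Proof.
move=> r0 uv; have ri : 0 < r^-1 by rewrite invr_gt0.
have := young_vdot u v _ ri; rewrite invrK.
have : r^-1 * sqnorm u <= r * sqnorm v.
  by rewrite -(ler_pM2l r0) mulrA divff ?gt_eqF // mul1r mulrA -expr2.
lra.
Qed.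

Lemma sqnormD3_le u v w :
  sqnorm (u + v + w) <= 3 * sqnorm u + 3 * sqnorm v + 3 * sqnorm w.
Proof.
rewrite /sqnorm /vdot !mulr_sumr -!big_split /=; apply: ler_sum => i _; rewrite !mxE.
set a := u ord0 i; set b := v ord0 i; set c := w ord0 i.
have := sqr_ge0 (a - b); have := sqr_ge0 (a - c); have := sqr_ge0 (b - c); nra.
Qed.

Lemma sqnorm_le_of_enorm_le {L : R} {u v} :
  0 <= L -> enorm u <= L * enorm v -> sqnorm u <= L ^+ 2 * sqnorm v.
Proof.
have enorm_sq w : enorm w ^+ 2 = sqnorm w by rewrite sqr_sqrtr // sqnorm_ge0.
move=> L0 uv; rewrite -!enorm_sq -exprMn.
by apply: lerXn2r; rewrite ?nnegrE ?mulr_ge0 ?sqrtr_ge0.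
Qed.

End VectorAlgebra.

Lemma mean_value01 {R : realType} {k dk : R -> R} :
  (forall s : R, is_derive s (1 : R) k (dk s)) ->
  exists2 s, 0 < s < 1 & k 1 - k 0 = dk s.
Proof.
move=> k'; have cont : {within `[0, 1], continuous k}.
  apply: continuous_subspaceT => s; apply: differentiable_continuous.
  by apply/derivable1_diffP; case: (k' s).
have [s s01 ->] := MVT ltr01 (fun s _ => k' s) cont.
by exists s; [rewrite in_itv /= in s01 | rewrite subr0 mulr1].
Qed.

Section SmoothConvex.
Context {R : realType} {d : nat}.
Context {f : 'rV[R]_d -> R} {grad : 'rV[R]_d -> 'rV[R]_d}.
Hypothesis grad_f : is_gradient f grad.

Lemma is_derive_line x h (s : R) :
  is_derive s (1 : R) (fun s => f (x + s *: h)) (vdot (grad (x + s *: h)) h).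
Proof.
have quot : (fun r : R => r^-1 *: (((fun s => f (x + s *: h)) \o shift s) (r *: 1)
                                   - f (x + s *: h)))
    = (fun r : R => r^-1 *: ((f \o shift (x + s *: h)) (r *: h) - f (x + s *: h))).
  apply/funext => r /=; congr (_ *: (f _ - _)).
  by rewrite /shift /= -[r *: 1]/(r * 1) mulr1 scalerDl addrCA.
have [df dfE] := grad_f (x + s *: h).
apply: DeriveDef; first by rewrite /derivable quot; exact: diff_derivable.
by rewrite /derive quot -/(derive f _ h) deriveE // dfE.
Qed.

Lemma is_derive_line_quadratic x h (a b s : R) :
  is_derive s (1 : R) (fun s => f (x + s *: h) - s * a - b * (s * s))
    (vdot (grad (x + s *: h)) h - a - b * (2 * s)).
Proof.
have Da : is_derive s 1 (a \*: (@id R)) (a *: 1) by apply: is_deriveZ.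
have Db : is_derive s 1 (b \*: ((@id R) * (@id R))) (b *: (s *: 1 + s *: 1)).
  by apply: is_deriveZ; exact: is_deriveM.
have := is_deriveB (is_deriveB (is_derive_line x h s) Da) Db.
set g := (_ - _ - _ : R -> R).
have -> : g = (fun s => f (x + s *: h) - s * a - b * (s * s)).
  by apply/funext => r; rewrite /g -[LHS]/(f (x + r *: h) - a * r - b * (r * r)) [a * r]mulrC.
move/is_derive_eq; apply.
rewrite -[a *: 1]/(a * 1) -[s *: 1]/(s * 1) -[b *: _]/(b * _); ring.
Qed.

Section Convex.
Hypothesis grad_monotone : forall y z, 0 <= vdot (y - z) (grad y - grad z).

Lemma gradient_inequality x h : f x + vdot (grad x) h <= f (x + h).
Proof.
have [s /andP[s0 _]] := mean_value01 (is_derive_line x h).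
rewrite scale1r scale0r addr0 => mvt.
have := grad_monotone (x + s *: h) x.
rewrite addrAC subrr add0r vdotZl pmulr_rge0 // vdotBr !(vdotC h); lra.
Qed.

End Convex.

Section Smooth.
Context {L : R}.
Hypothesis L_gt0 : 0 < L.
Hypothesis grad_lipschitz : forall y z, enorm (grad y - grad z) <= L * enorm (y - z).

Lemma descent_lemma x h : f (x + h) <= f x + vdot (grad x) h + L / 2 * sqnorm h.
Proof.
(* mean value theorem for s |-> f (x + s h) - s <grad x, h> - (L/2) |h|^2 s^2 *)
have [s /andP[s0 s1]] :=
  mean_value01 (is_derive_line_quadratic x h (vdot (grad x) h) (L / 2 * sqnorm h)).
rewrite scale1r scale0r addr0 !mul0r !mulr0 !subr0 !mul1r mulr1 => mvt.
have Ls : 0 < L * s by rewrite mulr_gt0.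
have lip : sqnorm (grad (x + s *: h) - grad x) <= (L * s) ^+ 2 * sqnorm h.
  have := sqnorm_le_of_enorm_le (ltW L_gt0) (grad_lipschitz (x + s *: h) x).
  by rewrite addrAC subrr add0r sqnormZ exprMn mulrA.
have := vdot_le_of_sqnorm_le Ls lip; rewrite vdotBl.
have : L * s * sqnorm h <= L * sqnorm h.
  by rewrite -mulrA ler_pM2l // ler_piMl ?sqnorm_ge0 ?ltW.
have := sqnorm_ge0 h; lra.
Qed.

Lemma grad_argmin_eq0 {xstar} : (forall y, f xstar <= f y) -> grad xstar = 0.
Proof.
move=> xstar_min; apply/eqP; rewrite -sqnorm_eq0 eq_le sqnorm_ge0 andbT.
have := descent_lemma xstar ((- L^-1) *: grad xstar).
have := xstar_min (xstar + (- L^-1) *: grad xstar).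
rewrite vdotZr sqnormZ sqrrN -/(sqnorm (grad xstar)); set S := sqnorm _.
have -> : L / 2 * (L^-1 ^+ 2 * S) = L^-1 / 2 * S by field; rewrite gt_eqF.
move=> ? ?; have : L^-1 / 2 * S <= 0 by lra.
by rewrite pmulr_rle0 // divr_gt0 // invr_gt0.
Qed.

Hypothesis grad_monotone : forall y z, 0 <= vdot (y - z) (grad y - grad z).

(* Compare f y with f at the gradient step z = y - (grad y - grad x) / L from
   above (descent lemma at y) and from below (gradient inequality at x). *)
Lemma gradient_inequality_sharp x y :
  f x + vdot (grad x) (y - x) + (2 * L)^-1 * sqnorm (grad y - grad x) <= f y.
Proof.
set q := grad y - grad x; set z := y + (- L^-1) *: q.
have below := gradient_inequality grad_monotone x (z - x); rewrite [x + _]addrC subrK in below.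
have above := descent_lemma y ((- L^-1) *: q); rewrite -/z in above.
rewrite vdotBr !vdotDr !vdotZr in below.
rewrite vdotZr sqnormZ sqrrN in above.
have qq : vdot (grad y) q - vdot (grad x) q = sqnorm q by rewrite -vdotBl.
have -> : (2 * L)^-1 = L^-1 / 2 by rewrite invfM mulrC.
have Lq2 : L / 2 * (L^-1 ^+ 2 * sqnorm q) = L^-1 / 2 * sqnorm q.
  by field; rewrite gt_eqF.
have Lq : L^-1 * vdot (grad y) q - L^-1 * vdot (grad x) q = L^-1 * sqnorm q.
  by rewrite -qq mulrBr.
rewrite vdotBr; move: above below Lq Lq2; rewrite vdotBr; lra.
Qed.

Lemma grad_cocoercive x y :
  sqnorm (grad y - grad x) <= L * vdot (y - x) (grad y - grad x).
Proof.
have xy := gradient_inequality_sharp x y.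
have yx := gradient_inequality_sharp y x.
rewrite -sqnormN opprB in yx.
have -> : vdot (y - x) (grad y - grad x)
    = - vdot (grad x) (y - x) - vdot (grad y) (x - y).
  by rewrite !vdotBl !vdotBr !(vdotC (grad _)); ring.
have Li : 0 < L^-1 by rewrite invr_gt0.
rewrite -(ler_pM2l Li) mulrA mulVf ?gt_eqF // mul1r.
have -> : L^-1 = 2 * (2 * L)^-1 by rewrite invfM mulrA divff // mul1r.
lra.
Qed.

End Smooth.
End SmoothConvex.

Lemma strong_monotone_le_lipschitz {R : realType} {d : nat}
    {grad : 'rV[R]_d -> 'rV[R]_d} {c L : R} {u : 'rV[R]_d} :
  0 < L -> (forall y z, enorm (grad y - grad z) <= L * enorm (y - z)) ->
  (forall y z, c * sqnorm (y - z) <= vdot (y - z) (grad y - grad z)) ->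
  0 < sqnorm u -> c <= L.
Proof.
move=> L0 lip mono u0; rewrite -(ler_pM2r u0).
have := mono u 0; rewrite subr0 vdotC => /le_trans; apply.
apply: vdot_le_of_sqnorm_le => //.
by have := sqnorm_le_of_enorm_le (ltW L0) (lip u 0); rewrite subr0.
Qed.

Lemma sqnorm_step_le {R : realType} {d : nat} (a L c S : R) (e y g gx : 'rV[R]_d) :
  0 < a -> 0 < L -> 0 < c -> 3 * a * L <= 1 ->
  sqnorm (g - gx) <= L ^+ 2 * S ->
  sqnorm gx <= L * vdot e gx ->
  c * sqnorm e <= vdot e gx ->
  sqnorm (e - a *: y) <= (1 - a * c / 2) * sqnorm e
     + (2 * a * L ^+ 2 / c + 3 * a ^+ 2 * L ^+ 2) * S
     + 3 * a ^+ 2 * sqnorm (y - g) - 2 * a * vdot e (y - g).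
Proof.
move=> a0 L0 c0 aL perturb cocoer strong.
set noise := y - g; set p := g - gx in perturb *.
have y_split : y = noise + p + gx by rewrite /noise /p !addrA !subrK.
have expand : sqnorm (e - a *: y)
    = sqnorm e - 2 * a * (vdot e noise + vdot e p + vdot e gx) + a ^+ 2 * sqnorm y.
  by rewrite sqnormB sqnormZ vdotZr {1}y_split !vdotDr; ring.
have three : a ^+ 2 * sqnorm y
    <= 3 * a ^+ 2 * sqnorm noise + 3 * a ^+ 2 * sqnorm p + 3 * a ^+ 2 * sqnorm gx.
  have := ler_wpM2l (sqr_ge0 a) (sqnormD3_le noise p gx); rewrite -y_split; lra.
have young : - (2 * a * vdot e p) <= a * c / 2 * sqnorm e + 2 * a / c * sqnorm p.
  have c2 : 0 < c / 2 by rewrite divr_gt0.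
  have := ler_wpM2l (ltW a0) (young_vdot e (- p) _ c2).
  rewrite vdotNr sqnormN invf_div; lra.
have a2 : 0 < a ^+ 2 by rewrite exprn_gt0.
have p_le : 2 * a / c * sqnorm p + 3 * a ^+ 2 * sqnorm p
    <= (2 * a * L ^+ 2 / c + 3 * a ^+ 2 * L ^+ 2) * S.
  have k0 : 0 <= 2 * a / c + 3 * a ^+ 2.
    have : 0 < 2 * a / c by rewrite divr_gt0 ?mulr_gt0.
    lra.
  have := ler_wpM2l k0 perturb; lra.
have gx_le : 3 * a ^+ 2 * sqnorm gx <= a * vdot e gx.
  apply: le_trans (ler_wpM2l (ltW (mulr_gt0 _ a2)) cocoer) _ => //.
  have eg0 : 0 <= vdot e gx by apply: le_trans strong; rewrite mulr_ge0 ?sqnorm_ge0 ?ltW.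
  have -> : 3 * a ^+ 2 * (L * vdot e gx) = (3 * a * L) * (a * vdot e gx) by ring.
  by rewrite ler_piMl // mulr_ge0 // ltW.
have := ler_wpM2l (ltW a0) strong.
rewrite expand; lra.
Qed.

Lemma sgd_step_sqnorm_le {R : realType} {d : nat}
    (f : 'rV[R]_d -> R) (grad : 'rV[R]_d -> 'rV[R]_d) (L c a : R) (xstar x v y : 'rV[R]_d) :
  is_gradient f grad -> 0 < L ->
  (forall y z, enorm (grad y - grad z) <= L * enorm (y - z)) -> 0 < c ->
  (forall y z, c * sqnorm (y - z) <= vdot (y - z) (grad y - grad z)) ->
  (forall y, f xstar <= f y) -> 0 < a -> 3 * a * L <= 1 ->
  sqnorm (x - a *: y - xstar) <= (1 - a * c / 2) * sqnorm (x - xstar)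
     + (2 * a * L ^+ 2 / c + 3 * a ^+ 2 * L ^+ 2) * sqnorm (x - v)
     + 3 * a ^+ 2 * sqnorm (y - grad v) - 2 * a * vdot (x - xstar) (y - grad v).
Proof.
move=> f_grad L0 lip c0 strong xstar_min a0 aL.
have monotone y' z : 0 <= vdot (y' - z) (grad y' - grad z).
  by apply: le_trans (strong y' z); rewrite mulr_ge0 ?sqnorm_ge0 ?ltW.
have grad_xstar := grad_argmin_eq0 f_grad L0 lip xstar_min.
have perturb : sqnorm (grad v - grad x) <= L ^+ 2 * sqnorm (x - v).
  by rewrite -[sqnorm (x - v)]sqnormN opprB; exact: sqnorm_le_of_enorm_le (ltW L0) (lip v x).
have cocoer : sqnorm (grad x) <= L * vdot (x - xstar) (grad x).
  by have := grad_cocoercive f_grad L0 lip monotone xstar x; rewrite grad_xstar subr0.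
have strong_x : c * sqnorm (x - xstar) <= vdot (x - xstar) (grad x).
  by have := strong x xstar; rewrite grad_xstar subr0.
by rewrite addrAC; exact: sqnorm_step_le a0 L0 c0 aL perturb cocoer strong_x.
Qed.

Definition rmeasurable_wrt {T : Type} {R : realType} (G : set (set T)) (Z : T -> R) :=
  forall B : set R, measurable B -> G (Z @^-1` B).

Lemma rmeasurable_wrt_comp {T : Type} {R : realType} {G : set (set T)} {Z : T -> R}
    {h : R -> R} :
  measurable_fun setT h -> rmeasurable_wrt G Z -> rmeasurable_wrt G (h \o Z).
Proof.
move=> mh GZ B mB; rewrite comp_preimage; apply: GZ.
by have := mh measurableT B mB; rewrite setTI.
Qed.

Section ConditionalMeanZero.
Context {d0 : measure_display} {T : measurableType d0} {R : realType}.
Variables (mu : {measure set T -> \bar R}) (G : set (set T)) (D : T -> R).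
Hypothesis G_measurable : forall A, G A -> measurable A.
Hypothesis D_integrable : mu.-integrable setT (EFin \o D).
Hypothesis D_mean0 : forall A, G A -> (\int[mu]_(w in A) (D w)%:E = 0)%E.

Definition uncorrelated (h : T -> R) :=
  mu.-integrable setT (fun w => (h w * D w)%:E) /\ (\int[mu]_w (h w * D w)%:E = 0)%E.

Lemma uncorrelated_indic A : G A -> uncorrelated \1_A.
Proof.
move=> GA; have mA := G_measurable _ GA; rewrite /uncorrelated.
have -> : (fun w => (\1_A w * D w)%:E) = (EFin \o D) \_ A.
  by apply/funext => w; rewrite /patch indicE; case: (w \in A); rewrite /= ?mul1r ?mul0r.
split; last by rewrite -integral_mkcond D_mean0.
by apply/(integrable_mkcond _ mA).1; exact: integrableS D_integrable.
Qed.

Lemma uncorrelatedZ (k : R) h : uncorrelated h -> uncorrelated (fun w => k * h w).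
Proof.
move=> [ih Ih]; rewrite /uncorrelated /=.
have -> : (fun w => (k * h w * D w)%:E) = (fun w => k%:E * (h w * D w)%:E)%E.
  by apply/funext => w; rewrite -mulrA EFinM.
by split; [exact: integrableZl | rewrite integralZl // Ih mule0].
Qed.

Lemma uncorrelatedD h1 h2 :
  uncorrelated h1 -> uncorrelated h2 -> uncorrelated (fun w => h1 w + h2 w).
Proof.
move=> [i1 I1] [i2 I2]; rewrite /uncorrelated /=.
have -> : (fun w => ((h1 w + h2 w) * D w)%:E)
    = ((fun w => (h1 w * D w)%:E) \+ (fun w => (h2 w * D w)%:E))%E.
  by apply/funext => w; rewrite mulrDl EFinD.
by split; [exact: integrableD | rewrite integralD // I1 I2 adde0].
Qed.

Lemma uncorrelated_sum (I : Type) (s : seq I) (h : I -> T -> R) :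
  (forall k, uncorrelated (h k)) -> uncorrelated (fun w => \sum_(k <- s) h k w).
Proof.
move=> hk; elim: s => [|k s IH]; last first.
  by under eq_fun do rewrite big_cons; exact: uncorrelatedD.
rewrite /uncorrelated; under eq_fun do rewrite big_nil mul0r.
by split; [exact: integrable0 | exact: integral0].
Qed.

Variable Z : T -> R.
Hypothesis Z_measurable : rmeasurable_wrt G Z.

Lemma uncorrelated_approx n : uncorrelated (approx setT (EFin \o Z) n).
Proof.
rewrite /approx; apply: uncorrelatedD.
  apply: uncorrelated_sum => k; apply: uncorrelatedZ; apply: uncorrelated_indic.
  rewrite /dyadic_approx; case: ifPn => _; last by rewrite -(preimage_set0 Z); exact: Z_measurable.
  have -> : setT `&` [set x | (EFin \o Z) x \in EFin @` [set` dyadic_itv R n k]]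
      = Z @^-1` [set` dyadic_itv R n k].
    apply/seteqP; split => w /=; first by case=> _; rewrite inE /= => -[r ? [<-]].
    by move=> wI; split => //; rewrite inE; exists (Z w).
  exact: (Z_measurable _ (measurable_itv _)).
apply: uncorrelatedZ; apply: uncorrelated_indic.
have -> : integer_approx setT (EFin \o Z) n = Z @^-1` `[n%:R, +oo[.
  apply/seteqP; split => w /=; rewrite /integer_approx /= in_itv /= andbT lee_fin.
    by case.
  by move=> h; split.
exact: (Z_measurable _ (measurable_itv _)).
Qed.

Lemma approx_ge0 n w : 0 <= approx setT (EFin \o Z) n w.
Proof.
have indic_ge0 (A : set T) : 0 <= \1_A w :> R by rewrite indicE; case: (_ \in _).
apply: addr_ge0; last exact: mulr_ge0.
by apply: sumr_ge0 => k _; apply: mulr_ge0.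
Qed.

Lemma uncorrelated_ge0 : (forall w, 0 <= Z w) ->
  mu.-integrable setT (fun w => (Z w * D w)%:E) -> uncorrelated Z.
Proof.
move=> Z_ge0 iZD; split => //.
pose fn n w := (approx setT (EFin \o Z) n w * D w)%:E.
have Z0 x : setT x -> (0 <= (EFin \o Z) x)%E by rewrite /= lee_fin.
have fn_cvg x : setT x -> fn ^~ x @ \oo --> (Z x * D x)%:E.
  move=> _; apply: cvg_EFin; first by near=> n.
  by apply: cvgMr_tmp; exact: (cvg_approx Z0 (I : setT x) (ltry _)).
have fn_dom n x : setT x -> (`|fn n x| <= `|(Z x * D x)%:E|)%E.
  move=> _; rewrite /fn !abse_EFin lee_fin !normrM ler_wpM2r //.
  rewrite !ger0_norm ?approx_ge0 ?Z_ge0 //.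
  by have := le_approx n Z0 (I : setT x); rewrite lee_fin.
have ZD_fin x : setT x -> ((abse \o (fun w => (Z w * D w)%:E)) x \is a fin_num)%E.
  by [].
have := dominated_cvg measurableT (fun n => measurable_int mu (uncorrelated_approx n).1)
  fn_cvg ZD_fin (integrable_abse iZD) fn_dom.
have -> : (fun n => \int[mu]_(x in setT) fn n x)%E = cst 0%E.
  by apply/funext => n; exact: (uncorrelated_approx n).2.
by move=> ZD_lim; exact: (cvg_unique _ ZD_lim (cvg_cst _)).
Unshelve. all: by end_near.
Qed.

End ConditionalMeanZero.

Lemma uncorrelated_measurable {d0 : measure_display} {T : measurableType d0} {R : realType}
    {mu : {measure set T -> \bar R}} {G : set (set T)} {D Z : T -> R} :
  (forall A, G A -> measurable A) -> mu.-integrable setT (EFin \o D) ->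
  (forall A, G A -> (\int[mu]_(w in A) (D w)%:E = 0)%E) ->
  rmeasurable_wrt G Z -> mu.-integrable setT (fun w => (Z w * D w)%:E) ->
  uncorrelated mu D Z.
Proof.
move=> G_meas iD D0 GZ iZD.
have mZ : measurable_fun setT Z.
  by move=> _ B mB; rewrite setTI; apply: G_meas; exact: GZ.
have mD : measurable_fun setT D by apply/measurable_EFinP; exact: measurable_int iD.
have part (h : R -> R) : measurable_fun setT h -> (forall r, `|h r| <= `|r|) ->
    (forall r, 0 <= h r) -> uncorrelated mu D (h \o Z).
  move=> mh h_le h_ge0; apply: (@uncorrelated_ge0 _ _ _ mu G D G_meas iD D0).
  - exact: rmeasurable_wrt_comp.
  - by move=> w; exact: h_ge0.
  apply: le_integrable iZD => //; last first.
    by move=> w _; rewrite !abse_EFin lee_fin !normrM ler_wpM2r // h_le.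
  by apply/measurable_EFinP; apply: measurable_funM => //; exact: measurableT_comp.
have pos_le r : `|(@id R)^\+ r| <= `|r|.
  by rewrite /funrpos ger0_norm ?le_max ?lexx ?orbT // ge_max normr_ge0 ler_norm.
have neg_le r : `|(@id R)^\- r| <= `|r|.
  by rewrite /funrneg ger0_norm ?le_max ?lexx ?orbT // ge_max normr_ge0 -normrN ler_norm.
have pos_neg r : (@id R)^\+ r - (@id R)^\- r = r.
  exact: (congr1 (fun g => g r) (funrposBneg (@id R))).
have mid := @measurable_id _ R setT.
have [ipos Ipos] := part _ (measurable_funrpos mid) pos_le (funrpos_ge0 _).
have [ineg Ineg] := part _ (measurable_funrneg mid) neg_le (funrneg_ge0 _).
rewrite /uncorrelated.
have -> : (fun w => (Z w * D w)%:E) = ((fun w => (((@id R)^\+ \o Z) w * D w)%:E)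
                                     \- (fun w => (((@id R)^\- \o Z) w * D w)%:E))%E.
  by apply/funext => w; rewrite -EFinB -mulrBl /= pos_neg.
by split; [exact: integrableB | rewrite integralB // Ipos Ineg sube0].
Qed.

Section IntegrableEFin.
Context {d0 : measure_display} {T : measurableType d0} {R : realType}.
Context {mu : {measure set T -> \bar R}}.
Context {f h : T -> R}.
Hypotheses (f_int : mu.-integrable setT (fun w => (f w)%:E))
           (h_int : mu.-integrable setT (fun w => (h w)%:E)).

Lemma integrable_EFinD : mu.-integrable setT (fun w => (f w + h w)%:E).
Proof. exact: integrableD f_int h_int. Qed.

Lemma integrable_EFinB : mu.-integrable setT (fun w => (f w - h w)%:E).
Proof. exact: integrableB f_int h_int. Qed.

Lemma integrable_EFinZl (k : R) : mu.-integrable setT (fun w => (k * f w)%:E).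
Proof. exact: integrableZl f_int. Qed.

End IntegrableEFin.

Section RandomVectors.
Context {d0 : measure_display} {T : measurableType d0} {R : realType} {n : nat}.
Implicit Types (P Q : T -> 'rV[R]_n) (G : set (set T)).

Definition coord_measurable P := forall i : 'I_n, measurable_fun setT (fun w => P w ord0 i).

Lemma coord_measurableB {P Q} :
  coord_measurable P -> coord_measurable Q -> coord_measurable (fun w => P w - Q w).
Proof.
move=> mP mQ i; rewrite (_ : (fun w => _) = (fun w => P w ord0 i - Q w ord0 i)).
  exact: measurable_funB.
by apply/funext => w; rewrite !mxE.
Qed.

Lemma measurable_vdot {P Q} : coord_measurable P -> coord_measurable Q ->
  measurable_fun setT (fun w => vdot (P w) (Q w)).
Proof. by move=> mP mQ; apply: measurable_sum => i; exact: measurable_funM. Qed.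

Lemma measurable_sqnorm {P} : coord_measurable P -> measurable_fun setT (fun w => sqnorm (P w)).
Proof. by move=> mP; exact: measurable_vdot. Qed.

Lemma vmeasurable_wrt_coord_measurable {G P} : (forall A, G A -> measurable A) ->
  vmeasurable_wrt G P -> coord_measurable P.
Proof. by move=> G_meas GP i _ B mB; rewrite setTI; apply: G_meas; exact: GP. Qed.

Lemma vmeasurable_wrt_subr {G P} (u : 'rV[R]_n) :
  vmeasurable_wrt G P -> vmeasurable_wrt G (fun w => P w - u).
Proof.
move=> GP i; rewrite (_ : (fun w => _) = (fun r => r - u ord0 i) \o (fun w => P w ord0 i)).
  apply: (rmeasurable_wrt_comp _ (GP i)).
  by apply: measurable_funB; [exact: measurable_id | exact: measurable_cst].
by apply/funext => w; rewrite /= !mxE.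
Qed.

Context {mu : probability T R}.

Lemma integrable_sqnorm {P} : coord_measurable P -> (Esq mu P < +oo)%E ->
  mu.-integrable setT (fun w => (sqnorm (P w))%:E).
Proof.
move=> mP P_fin; apply/integrableP; split; first exact/measurable_EFinP/measurable_sqnorm.
by under eq_integral do rewrite abse_EFin (ger0_norm (sqnorm_ge0 _)).
Qed.

Lemma integrable_coord_mul {P Q} i : coord_measurable P -> coord_measurable Q ->
  mu.-integrable setT (fun w => (sqnorm (P w))%:E) ->
  mu.-integrable setT (fun w => (sqnorm (Q w))%:E) ->
  mu.-integrable setT (fun w => (P w ord0 i * Q w ord0 i)%:E).
Proof.
move=> mP mQ iP iQ; apply: le_integrable (integrable_EFinD iP iQ) => //.
  exact/measurable_EFinP/measurable_funM.
move=> w _; rewrite !abse_EFin lee_fin /= [X in _ <= X]ger0_norm; last first.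
  by rewrite addr_ge0 ?sqnorm_ge0.
have := sqr_coord_le_sqnorm (P w) i; have := sqr_coord_le_sqnorm (Q w) i.
set a := P w ord0 i; set b := Q w ord0 i => bQ aP.
have := sqr_ge0 (a + b); have := sqr_ge0 (a - b).
by rewrite ler_norml => *; apply/andP; split; nra.
Qed.

Lemma integrable_vdot {P Q} : coord_measurable P -> coord_measurable Q ->
  mu.-integrable setT (fun w => (sqnorm (P w))%:E) ->
  mu.-integrable setT (fun w => (sqnorm (Q w))%:E) ->
  mu.-integrable setT (fun w => (vdot (P w) (Q w))%:E).
Proof.
move=> mP mQ iP iQ; under eq_fun do rewrite /vdot -sumEFin.
by apply: (integrable_sum measurableT) => i _; exact: integrable_coord_mul.
Qed.

Lemma condexp_eq_coord_measurable {G} {Y g : T -> 'rV[R]_n} :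
  condexp_eq mu G Y g -> coord_measurable (fun w => Y w - g w).
Proof.
move=> [_ iY ig _]; apply: coord_measurableB => i; apply/measurable_EFinP.
- exact: measurable_int (iY i).
- exact: measurable_int (ig i).
Qed.

Lemma integral_vdot_cond_mean0 {G P} {Y g : T -> 'rV[R]_n} :
  (forall A, G A -> measurable A) -> vmeasurable_wrt G P -> condexp_eq mu G Y g ->
  mu.-integrable setT (fun w => (sqnorm (P w))%:E) ->
  mu.-integrable setT (fun w => (sqnorm (Y w - g w))%:E) ->
  (\int[mu]_w (vdot (P w) (Y w - g w))%:E = 0)%E.
Proof.
move=> G_meas GP Yg iP iN; have [_ iY ig Y_mean] := Yg.
have mP := vmeasurable_wrt_coord_measurable G_meas GP.
have mN := condexp_eq_coord_measurable Yg.
under eq_integral do rewrite /vdot -sumEFin.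
rewrite integral_sum //; last by move=> i; exact: integrable_coord_mul.
apply: big1 => i _; under eq_integral do rewrite !mxE.
suff [_ ->] : uncorrelated mu (fun w => Y w ord0 i - g w ord0 i) (fun w => P w ord0 i) by [].
apply: (uncorrelated_measurable G_meas _ _ (GP i)).
- exact: integrable_EFinB (iY i) (ig i).
- move=> A GA; have mA := G_meas _ GA.
  have [iYA igA] := (integrableS measurableT mA (subsetT _) (iY i),
                     integrableS measurableT mA (subsetT _) (ig i)).
  under eq_integral do rewrite EFinB.
  by rewrite integralB_EFin // Y_mean // subee // integrable_fin_num.
- apply: eq_integrable (integrable_coord_mul i mP mN iP iN) => //.
  by move=> w _; rewrite !mxE.
Qed.

End RandomVectors.

Lemma Esq_step_le {d0 : measure_display} {T : measurableType d0} {R : realType}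
    {n : nat} {mu : probability T R} {G : set (set T)} {E W Q Y g : T -> 'rV[R]_n}
    (a b k m : R) {e q s : R} :
  (forall A, G A -> measurable A) -> G setT ->
  vmeasurable_wrt G E -> coord_measurable Q -> coord_measurable W ->
  condexp_eq mu G Y g -> condvar_le mu G Y g s ->
  0 <= b -> 0 <= k -> Esq mu E = e%:E -> (Esq mu Q <= q%:E)%E ->
  (forall w, sqnorm (W w) <= a * sqnorm (E w) + b * sqnorm (Q w)
                            + k * sqnorm (Y w - g w) - m * vdot (E w) (Y w - g w)) ->
  (Esq mu W <= (a * e + (b * q + k * s))%:E)%E.
Proof.
move=> G_meas GT GE mQ mW Y_mean Y_var b0 k0 Ee Qq W_le.
have mE := vmeasurable_wrt_coord_measurable G_meas GE.
have mN := condexp_eq_coord_measurable Y_mean.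
have Ns : (Esq mu (fun w => (Y w - g w)%R) <= s%:E)%E.
  by have := Y_var setT GT; rewrite probability_setT mule1.
have iE : mu.-integrable setT (fun w => (sqnorm (E w))%:E).
  by apply: integrable_sqnorm mE _; rewrite Ee ltry.
have iQ := integrable_sqnorm mQ (le_lt_trans Qq (ltry _)).
have iN := integrable_sqnorm mN (le_lt_trans Ns (ltry _)).
have iEN := integrable_vdot mE mN iE iN.
have iaE := integrable_EFinZl iE a; have ibQ := integrable_EFinZl iQ b.
have ikN := integrable_EFinZl iN k; have imEN := integrable_EFinZl iEN m.
have iaEbQ := integrable_EFinD iaE ibQ; have iaEbQkN := integrable_EFinD iaEbQ ikN.
have irhs := integrable_EFinB iaEbQkN imEN.
have iW : mu.-integrable setT (fun w => (sqnorm (W w))%:E).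
  apply: le_integrable irhs => //; first exact/measurable_EFinP/measurable_sqnorm.
  move=> w _; rewrite !abse_EFin lee_fin ger0_norm ?sqnorm_ge0 //.
  exact: le_trans (W_le w) (ler_norm _).
have Rint_Esq (P : T -> 'rV[R]_n) : mu.-integrable setT (fun w => (sqnorm (P w))%:E) ->
    Esq mu P = (\int[mu]_w sqnorm (P w))%:E.
  by move=> iP; rewrite /Rintegral fineK // integrable_fin_num.
rewrite (Rint_Esq _ iW) lee_fin.
apply: le_trans (le_Rintegral measurableT iW irhs (fun w _ => W_le w)) _.
rewrite RintegralB // RintegralD // RintegralD // !RintegralZl //.
have -> : \int[mu]_w vdot (E w) (Y w - g w) = 0.
  by rewrite /Rintegral (integral_vdot_cond_mean0 G_meas GE Y_mean iE iN).
have -> : \int[mu]_w sqnorm (E w) = e by rewrite /Rintegral -/(Esq mu E) Ee.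
move: Qq Ns; rewrite (Rint_Esq _ iQ) (Rint_Esq _ iN) !lee_fin => Qq Ns.
have := ler_wpM2l b0 Qq; have := ler_wpM2l k0 Ns; lra.
Qed.

Lemma Esq_neq0_exists {d0 : measure_display} {T : measurableType d0} {R : realType} {n : nat}
    {mu : probability T R} {P : T -> 'rV[R]_n} :
  Esq mu P != 0%E -> exists w, 0 < sqnorm (P w).
Proof.
apply: contra_neqP => none; rewrite /Esq -(integral0 mu setT); apply: eq_integral => w _.
apply/eqP; rewrite eqe eq_le sqnorm_ge0 andbT leNgt; apply/negP => Pw.
by apply: none; exists w.
Qed.

Lemma Esq_fin_or_pinfty {d0 : measure_display} {T : measurableType d0} {R : realType}
    {n : nat} (mu : probability T R) (P : T -> 'rV[R]_n) :
  (exists e, Esq mu P = e%:E) \/ Esq mu P = +oo%E.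
Proof.
have : (0 <= Esq mu P)%E by apply: integral_ge0 => w _; rewrite lee_fin sqnorm_ge0.
by case: (Esq mu P) => [e _|_|//]; [left; exists e | right].
Qed.

Theorem mainTheorem6
  (R : realType) (d : nat)
  (f : 'rV[R]_d -> R) (grad : 'rV[R]_d -> 'rV[R]_d)
  (L c alpha B sigma : R) (xstar : 'rV[R]_d)
  (d0 : measure_display) (T : measurableType d0) (mu : probability T R)
  (F : nat -> set (set T))
  (P : Type) (sched : nat -> P)
  (x0 : 'rV[R]_d)
  (x : nat -> T -> 'rV[R]_d)
  (v : nat -> P -> T -> 'rV[R]_d)
  (Gt : nat -> T -> 'rV[R]_d) :
  is_gradient f grad ->
  0 < L ->
  (forall y z, enorm (grad y - grad z) <= L * enorm (y - z)) ->
  0 < c ->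
  (forall y z, vdot (y - z) (grad y - grad z) >= c * sqnorm (y - z)) ->
  (forall y, f xstar <= f y) ->
  0 < alpha -> alpha <= 1 / (3 * L) ->
  0 < B ->
  is_filtration F ->
  x 0%N = (fun _ => x0) ->
  (forall t, vmeasurable_wrt (F t) (x t)) ->
  (forall t, vmeasurable_wrt (F t) (v t (sched t))) ->
  (forall t, vmeasurable_wrt (F t.+1) (Gt t)) ->
  (forall t, condexp_eq mu (F t) (Gt t) (fun w => grad (v t (sched t) w))) ->
  (forall t, condvar_le mu (F t) (Gt t) (fun w => grad (v t (sched t) w)) (sigma ^+ 2)) ->
  (forall t w, x t.+1 w = x t w - alpha *: Gt t w) ->
  (forall t, (Esq mu (fun w => (x t w - v t (sched t) w)%R) <= (alpha ^+ 2 * B ^+ 2)%:E)%E) ->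
  forall t : nat,
    (Esq mu (fun w => (x t.+1 w - xstar)%R)
     <= (1 - alpha * c / 2)%:E * Esq mu (fun w => (x t w - xstar)%R)
        + (2 * alpha ^+ 3 * B ^+ 2 * L ^+ 2 / c + 3 * alpha ^+ 2 * sigma ^+ 2
           + 3 * alpha ^+ 4 * L ^+ 2 * B ^+ 2)%:E)%E.
Proof.
move=> f_grad L0 lip c0 strong xstar_min a0 aL _ [F_sigma F_meas _] _ Fx Fv _
  Gt_mean Gt_var step consistent t.
have aL3 : 3 * alpha * L <= 1 by move: aL; rewrite ler_pdivlMr ?mulr_gt0 // mulrCA mulrA.
have FT : F t setT by have [F0 FC _] := F_sigma t; rewrite -(setD0 setT); exact: FC.
have [[e Ee]|E_inf] := Esq_fin_or_pinfty mu (fun w => x t w - xstar).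
- have K0 : 0 <= 2 * alpha * L ^+ 2 / c + 3 * alpha ^+ 2 * L ^+ 2.
    have : 0 < alpha * L ^+ 2 / c by rewrite divr_gt0 // mulr_gt0 // exprn_gt0.
    have : 0 < alpha ^+ 2 * L ^+ 2 by rewrite mulr_gt0 // exprn_gt0.
    lra.
  rewrite Ee; apply: le_trans.
    apply: (Esq_step_le (1 - alpha * c / 2) (2 * alpha * L ^+ 2 / c
             + 3 * alpha ^+ 2 * L ^+ 2) (3 * alpha ^+ 2) (2 * alpha) (F_meas t) FT
             (vmeasurable_wrt_subr xstar (Fx t)) _ _ (Gt_mean t) (Gt_var t) K0 _ Ee
             (consistent t)).
    + exact: coord_measurableB (vmeasurable_wrt_coord_measurable (F_meas t) (Fx t))
               (vmeasurable_wrt_coord_measurable (F_meas t) (Fv t)).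
    + exact: vmeasurable_wrt_coord_measurable (F_meas t.+1) (vmeasurable_wrt_subr xstar (Fx t.+1)).
    + by have := sqr_ge0 alpha; lra.
    + by move=> w; rewrite step; exact: sgd_step_sqnorm_le.
  rewrite -EFinM -EFinD lee_fin le_eqVlt; apply/orP; left; apply/eqP.
  by field; exact: lt0r_neq0.
- (* the bound is trivial once 1 - alpha c / 2 > 0, which follows from c <= L *)
  have : Esq mu (fun w => x t w - xstar) != 0%E by rewrite E_inf.
  move=> /Esq_neq0_exists [w Ew].
  have cL := strong_monotone_le_lipschitz L0 lip strong Ew.
  have : 0 < 1 - alpha * c / 2 by have := ler_wpM2l (ltW a0) cL; lra.
  by rewrite E_inf => a_pos; rewrite gt0_muley ?lte_fin // addye // leey.
Qed.
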